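(* Let $(Q,\rightarrow)$ be a finite transition system and $\mathscr{R}$ a preorder on $Q$. Then $\rightarrow^{-1}\subseteq \rightarrow_{\mathscr{R}}^{-1}\circ\mathscr{R}$ and $\rightarrow^{-1}\circ\mathscr{R}=\rightarrow_{\mathscr{R}}^{-1}\circ\mathscr{R}$. Explicitly: for every transition $q\rightarrow q'$ there is $q''$ with $q'\,\mathscr{R}\,q''$ and $q\rightarrow_{\mathscr{R}} q''$; and for all $x,y\in Q$, there exists $z$ with $x\,\mathscr{R}\,z$ and $y\rightarrow z$ iff there exists $z$ with $x\,\mathscr{R}\,z$ and $y\rightarrow_{\mathscr{R}} z$.
   Context: A finite transition system is a pair $(Q,\rightarrow)$ with $Q$ a finite set and $\rightarrow\subseteq Q\times Q$. For relations $\mathscr{R},\mathscr{S}$ on $Q$, $\mathscr{R}(q)=\{q'\mid q\,\mathscr{R}\,q'\}$, $\mathscr{R}(X)=\bigcup_{q\in X}\mathscr{R}(q)$, $\mathscr{R}^{-1}=\{(y,x)\mid (x,y)\in\mathscr{R}\}$, and the composition is $\mathscr{S}\circ\mathscr{R}=\{(x,y)\mid y\in\mathscr{S}(\mathscr{R}(x))\}$ (first $\mathscr{R}$, then $\mathscr{S}$). A preorder is a reflexive transitive relation; $[q]_{\mathscr{R}}=\{q'\mid q\,\mathscr{R}\,q'\wedge q'\,\mathscr{R}\,q\}$. A transition $q\rightarrow q'$ is $\mathscr{R}$-maximal, written $q\rightarrow_{\mathscr{R}}q'$, if for all $q''\in Q$, ($q\rightarrow q''$ and $q'\,\mathscr{R}\,q''$)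 implies $q''\in[q']_{\mathscr{R}}$; $\rightarrow_{\mathscr{R}}$ also denotes the relation formed by these transitions. *)

From mathcomp Require Import all_boot.
Set Implicit Arguments. Unset Strict Implicit. Unset Printing Implicit Defensive.

Definition rclass (Q : finType) (R : rel Q) (q : Q) : pred Q :=
  [pred q' | R q q' && R q' q].

Definition max_trans (Q : finType) (trans R : rel Q) (q q' : Q) : Prop :=
  trans q q' /\
  forall q'' : Q, trans q q'' -> R q' q'' -> q'' \in rclass R q'.

Definition relinv (Q : finType) (S : Q -> Q -> Prop) : Q -> Q -> Prop :=
  fun y x => S x y.
(* relcomp S R = S o R = {(x,y) | exists z, x R z /\ z S y}  (first R, then S) *)
Definition relcomp (Q : finType) (S R : Q -> Q -> Prop) : Q -> Q -> Prop :=
  fun x y => exists z, R x z /\ S z y.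
Definition relsub (Q : finType) (S T : Q -> Q -> Prop) : Prop :=
  forall x y, S x y -> T x y.
Definition releq (Q : finType) (S T : Q -> Q -> Prop) : Prop :=
  forall x y, S x y <-> T x y.

From mathcomp Require Import all_boot.
Set Implicit Arguments. Unset Strict Implicit. Unset Printing Implicit Defensive.

(* In a finite preorder, going strictly up shrinks the up-set [R x], so
   minimising #|R m| among the [P]-elements above [x] yields a [P]-element
   [m] that is maximal (up to R-equivalence). Taking [P := trans q] and
   starting from any successor [q'] gives an R-maximal transition
   [q ->_R m] with [q' R m], which is the first claim; the second follows
   by transitivity of R, and because maximal transitions are transitions. *)

Section FinitePreorder.

Variables (T : finType) (R : rel T).
Hypotheses (R_refl : reflexive R) (R_trans : transitive R).

Lemma subset_up x y : R x y -> R y \subset R x.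
Proof.
by move=> Rxy; apply/subsetP => u; rewrite !unfold_in; apply: R_trans.
Qed.

Lemma card_up_leq_rev x y : R x y -> #|R x| <= #|R y| -> R y x.
Proof.
move=> Rxy le_xy; have sub_yx := subset_up Rxy.
have /subset_cardP/(_ sub_yx) eq_up : #|R y| = #|R x|.
  by apply/eqP; rewrite eqn_leq le_xy subset_leq_card.
by have := R_refl x; rewrite -unfold_in -eq_up.
Qed.

Lemma exists_maximal_above (P : pred T) x : P x ->
  exists m, [/\ R x m, P m & forall y, P y -> R m y -> R y m].
Proof.
move=> Px; have Px_up : P x && R x x by rewrite Px R_refl.
have [m /andP[Pm Rxm] min_m] :=
  @arg_minnP _ x (fun w => P w && R x w) (fun w => #|R w|) Px_up.
exists m; split=> // y Py Rmy; apply: card_up_leq_rev => //.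
by apply: min_m; rewrite Py (R_trans Rxm Rmy).
Qed.

End FinitePreorder.

Lemma exists_max_trans_above (Q : finType) (trans R : rel Q) (q q' : Q) :
  reflexive R -> transitive R ->
  trans q q' -> exists q'', R q' q'' /\ max_trans trans R q q''.
Proof.
move=> R_refl R_trans tqq'.
have [m [Rq'm tqm max_m]] := exists_maximal_above R_refl R_trans tqq'.
exists m; split=> //; split=> // y tqy Rmy.
by rewrite inE /= Rmy max_m.
Qed.

Theorem lemma1 (Q : finType) (trans R : rel Q)
    (R_refl : reflexive R) (R_trans : transitive R) :
  relsub (relinv (fun x y => trans x y))
         (relcomp (relinv (max_trans trans R)) (fun x y => R x y)) /\
  releq (relcomp (relinv (fun x y => trans x y)) (fun x y => R x y))
        (relcomp (relinv (max_trans trans R)) (fun x y => R x y)).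
Proof.
split.
  move=> x y tyx.
  have [z [Rxz max_yz]] := exists_max_trans_above R_refl R_trans tyx.
  by exists z.
move=> x y; split.
  case=> z [Rxz tyz].
  have [w [Rzw max_yw]] := exists_max_trans_above R_refl R_trans tyz.
  by exists w; split=> //; apply: R_trans Rxz Rzw.
by case=> z [Rxz [tyz _]]; exists z.
Qed.
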